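(* If $\rho\equiv\sum_{n=1}^N \frac{r_n}{C_n}\le 1$, then every packet $p^{g,j}$ of the aggregate flow has delay $d^{g,j}-a^{g,j}\le \sum_{n=1}^N\frac{\sigma_n}{C_n}$. Moreover, the bound is tight: there exist arrival patterns satisfying the constraints (e.g. each class $m$ releasing a burst of total size $\sigma_m$ at time $0$) for which some packet has delay exactly $\sum_n \sigma_n/C_n$.
   Context: A multiclass FIFO system serves packets from $N$ classes. Class $n$ has constant service rate $C_n>0$. All packets, indexed in order of arrival (ties broken arbitrarily) as $p^{g,1},p^{g,2},\dots$ with arrival times $0\le a^{g,1}\le a^{g,2}\le\cdots$ and lengths $l^{g,j}>0$, depart at $d^{g,j}=\max\{a^{g,j},d^{g,j-1}\}+l^{g,j}/C_{c(j)}$, $d^{g,0}=0$, where $c(j)$ is the class of $p^{g,j}$ (work-conserving FIFO, initially empty, infinite buffer). $A_n(s,t)$ is the total length of class-$n$ packets arriving in $[s,t]$. Each class satisfies the leaky-bucket constraint $A_n(s,t)\le r_n(t-s)+\sigma_n$ for all $0\le s\le t$, with constants $r_n,\sigma_n\ge 0$. *)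

From Stdlib Require Import Reals Lra Lia.
Open Scope R_scope.

Fixpoint sumR (n : nat) (f : nat -> R) : R :=
  match n with
  | O => 0
  | S k => sumR k f + f k
  end.

(* Packets are indexed j = 1, 2, ...; classes are 0, ..., N-1.
   cls j = class of packet j, a j = arrival time, l j = length,
   C n = service rate of class n.
   dep j = departure time d^{g,j}, with d^{g,0} = 0. *)
Fixpoint dep (C : nat -> R) (cls : nat -> nat) (a l : nat -> R) (j : nat) : R :=
  match j with
  | O => 0
  | S k => Rmax (a (S k)) (dep C cls a l k) + l (S k) / C (cls (S k))
  end.

(* A_n(s,t) for a trace of K packets (indices 1..K): total length of
   class-n packets arriving in [s,t]. *)
Definition Arr (K : nat) (cls : nat -> nat) (a l : nat -> R) (n : nat) (s t : R) : R :=
  sumR K (fun i =>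
    if Nat.eqb (cls (S i)) n then
      if Rle_dec s (a (S i)) then
        if Rle_dec (a (S i)) t then l (S i) else 0
      else 0
    else 0).

Definition valid_trace (N : nat) (r sigma : nat -> R)
    (K : nat) (cls : nat -> nat) (a l : nat -> R) : Prop :=
  (forall j, (1 <= j <= K)%nat -> (cls j < N)%nat /\ 0 < l j /\ 0 <= a j) /\
  (forall j, (1 <= j < K)%nat -> a j <= a (S j)) /\
  (forall n, (n < N)%nat -> forall s t, 0 <= s -> s <= t ->
      Arr K cls a l n s t <= r n * (t - s) + sigma n).

From Stdlib Require Import Reals Lra Lia.
Open Scope R_scope.

(* Fix a packet j and let i <= j be the first packet of the busy
   period containing j: the server is busy from a_i until d_j, so
   d_j = a_i + sum_{k=i..j} l_k / C_{c(k)}  (lemma [dep_busy_period]).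
   Grouping that sum by class gives sum_n W_n / C_n, where W_n is the class-n
   work among packets i..j ([work_by_class]).  By FIFO order these packets all
   arrive in [a_i, a_j], so W_n <= A_n(a_i, a_j) <= r_n (a_j - a_i) + sigma_n
   ([class_work_le_arrivals], [class_work_le_envelope]).  Summing, using
   rho <= 1, yields d_j - a_j <= sum_n sigma_n / C_n ([fifo_delay_bound]).

   Every class n releases a burst of total size sigma_n at time 0
   ([burst_trace]); the last packet then departs at sum_n sigma_n / C_n
   ([dep_simultaneous]), which is exactly its delay ([fifo_delay_tight]). *)

Lemma sumR_ext (n : nat) (f g : nat -> R) :
  (forall k, (k < n)%nat -> f k = g k) -> sumR n f = sumR n g.
Proof.
  induction n as [|n IH]; intros H; simpl; [reflexivity|].
  rewrite IH, H by (intros; try apply H; lia). reflexivity.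
Qed.

Lemma sumR_le (n : nat) (f g : nat -> R) :
  (forall k, (k < n)%nat -> f k <= g k) -> sumR n f <= sumR n g.
Proof.
  induction n as [|n IH]; intros H; simpl; [lra|].
  assert (f n <= g n) by (apply H; lia).
  assert (sumR n f <= sumR n g) by (apply IH; intros; apply H; lia).
  lra.
Qed.

Lemma sumR_zero (n : nat) (f : nat -> R) :
  (forall k, (k < n)%nat -> f k = 0) -> sumR n f = 0.
Proof.
  intros H. rewrite (sumR_ext n f (fun _ => 0)) by exact H.
  induction n as [|n IH]; simpl; [reflexivity|]. rewrite IH by (intros; apply H; lia). ring.
Qed.

Lemma sumR_plus (n : nat) (f g : nat -> R) :
  sumR n (fun k => f k + g k) = sumR n f + sumR n g.
Proof. induction n as [|n IH]; simpl; [ring|]. rewrite IH. ring. Qed.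

Lemma sumR_scal (n : nat) (f : nat -> R) (c : R) :
  sumR n (fun k => f k * c) = sumR n f * c.
Proof. induction n as [|n IH]; simpl; [ring|]. rewrite IH. ring. Qed.

Lemma sumR_exchange (m n : nat) (F : nat -> nat -> R) :
  sumR m (fun k => sumR n (F k)) = sumR n (fun i => sumR m (fun k => F k i)).
Proof.
  induction m as [|m IH]; simpl.
  - symmetry. apply sumR_zero. reflexivity.
  - rewrite IH, <- sumR_plus. reflexivity.
Qed.

Lemma sumR_single (N c : nat) (x : nat -> R) : (c < N)%nat ->
  sumR N (fun n => if Nat.eqb c n then x n else 0) = x c.
Proof.
  induction N as [|N IH]; intros Hc; [lia|]. simpl.
  destruct (Nat.eqb_spec c N) as [->|Hne].
  - rewrite sumR_zero; [ring|]. intros k Hk. destruct (Nat.eqb_spec N k); [lia|reflexivity].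
  - rewrite IH by lia. ring.
Qed.

Lemma sumR_extend (m n : nat) (g : nat -> R) :
  (m <= n)%nat -> (forall k, (m <= k < n)%nat -> 0 <= g k) -> sumR m g <= sumR n g.
Proof.
  intros Hmn Hg. induction n as [|n IH].
  - replace m with 0%nat by lia. lra.
  - destruct (Nat.eq_dec m (S n)) as [->|Hne]; [lra|]. simpl.
    assert (0 <= g n) by (apply Hg; lia).
    assert (sumR m g <= sumR n g) by (apply IH; [lia|intros; apply Hg; lia]).
    lra.
Qed.

Definition work (C : nat -> R) (cls : nat -> nat) (l : nat -> R) (i j : nat) : R :=
  sumR j (fun k => if Nat.leb i (S k) then l (S k) / C (cls (S k)) else 0).

Definition class_work (cls : nat -> nat) (l : nat -> R) (i j n : nat) : R :=
  sumR j (fun k =>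
    if Nat.leb i (S k) then (if Nat.eqb (cls (S k)) n then l (S k) else 0) else 0).

(* Busy-period decomposition: packet j leaves at the arrival of the first
   packet i of its busy period plus the service demand of packets i..j. *)
Lemma dep_busy_period (C : nat -> R) (cls : nat -> nat) (a l : nat -> R) (j : nat) :
  (1 <= j)%nat -> 0 <= a 1%nat ->
  exists i, (1 <= i <= j)%nat /\ dep C cls a l j = a i + work C cls l i j.
Proof.
  intros Hj Ha1. induction j as [|j IH]; [lia|]. cbn [dep].
  destruct (Rle_dec (dep C cls a l j) (a (S j))) as [Hidle|Hbusy].
  - (* the server is idle when packet S j arrives: a new busy period starts *)
    exists (S j). split; [lia|]. rewrite Rmax_left by lra. unfold work. simpl.
    rewrite Nat.leb_refl, sumR_zero; [ring|].
    intros k Hk. destruct (Nat.leb_spec j k); [lia|reflexivity].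
  - destruct j as [|j]; [simpl in Hbusy; lra|].
    destruct IH as [i [Hi Hd]]; [lia|].
    exists i. split; [lia|]. rewrite Rmax_right, Hd by lra. unfold work. simpl.
    destruct (Nat.leb_spec i (S (S j))); [ring|lia].
Qed.

Lemma work_by_class (N : nat) (C : nat -> R) (cls : nat -> nat) (l : nat -> R) (i j : nat) :
  (forall k, (1 <= k <= j)%nat -> (cls k < N)%nat) ->
  work C cls l i j = sumR N (fun n => class_work cls l i j n / C n).
Proof.
  intros Hcls. unfold work, class_work.
  transitivity (sumR j (fun k => sumR N (fun n =>
     (if Nat.leb i (S k) then (if Nat.eqb (cls (S k)) n then l (S k) else 0) else 0) / C n))).
  - apply sumR_ext; intros k Hk. destruct (Nat.leb i (S k)).
    + rewrite <- (sumR_single N (cls (S k)) (fun n => l (S k) / C n)) by (apply Hcls; lia).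
      apply sumR_ext; intros n _. destruct (Nat.eqb (cls (S k)) n); unfold Rdiv; ring.
    + symmetry. apply sumR_zero. intros; unfold Rdiv; ring.
  - rewrite sumR_exchange. apply sumR_ext; intros n _. unfold Rdiv. apply sumR_scal.
Qed.

Lemma class_work_le_arrivals (K : nat) (cls : nat -> nat) (a l : nat -> R) (i j n : nat) :
  (j <= K)%nat ->
  (forall k, (1 <= k <= K)%nat -> 0 <= l k) ->
  (forall k, (i <= k <= j)%nat -> a i <= a k <= a j) ->
  class_work cls l i j n <= Arr K cls a l n (a i) (a j).
Proof.
  intros HjK Hl Hwin. unfold class_work, Arr.
  set (arrived := fun k => if Nat.eqb (cls (S k)) n then
      if Rle_dec (a i) (a (S k)) then if Rle_dec (a (S k)) (a j) then l (S k) else 0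
      else 0 else 0).
  assert (Harr : forall k, (k < K)%nat -> 0 <= arrived k).
  { intros k Hk. assert (0 <= l (S k)) by (apply Hl; lia). unfold arrived.
    destruct (Nat.eqb (cls (S k)) n), (Rle_dec (a i) (a (S k)));
      try destruct (Rle_dec (a (S k)) (a j)); lra. }
  apply Rle_trans with (sumR j arrived).
  - apply sumR_le; intros k Hk.
    destruct (Nat.leb_spec i (S k)) as [Hik|Hik]; [|apply Harr; lia].
    destruct (Hwin (S k)) as [Hlo Hhi]; [lia|]. unfold arrived.
    destruct (Nat.eqb (cls (S k)) n), (Rle_dec (a i) (a (S k)));
      try destruct (Rle_dec (a (S k)) (a j)); lra.
  - apply sumR_extend; [exact HjK|]. intros k Hk. apply Harr; lia.
Qed.

Lemma arrivals_monotone (K : nat) (a : nat -> R) :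
  (forall j, (1 <= j < K)%nat -> a j <= a (S j)) ->
  forall i j, (1 <= i)%nat -> (i <= j <= K)%nat -> a i <= a j.
Proof.
  intros Hmono i j Hi. induction j as [|j IH]; intros Hij; [lia|].
  destruct (Nat.eq_dec i (S j)) as [->|Hne]; [lra|].
  assert (a i <= a j) by (apply IH; lia).
  assert (a j <= a (S j)) by (apply Hmono; lia).
  lra.
Qed.

Lemma class_work_le_envelope (N : nat) (r sigma : nat -> R)
    (K : nat) (cls : nat -> nat) (a l : nat -> R) (i j n : nat) :
  valid_trace N r sigma K cls a l -> (1 <= i <= j)%nat -> (j <= K)%nat -> (n < N)%nat ->
  class_work cls l i j n <= r n * (a j - a i) + sigma n.
Proof.
  intros [Hpk [Hmono Hbucket]] Hij HjK Hn.
  assert (Hwin : forall k, (i <= k <= j)%nat -> a i <= a k <= a j).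
  { intros k Hk. split; apply (arrivals_monotone K a Hmono); lia. }
  eapply Rle_trans.
  - apply (class_work_le_arrivals K); [exact HjK| |exact Hwin].
    intros k Hk. left. apply Hpk, Hk.
  - apply Hbucket; [exact Hn| apply Hpk; lia| apply Hwin; lia].
Qed.

Lemma fifo_delay_bound (N : nat) (C r sigma : nat -> R)
  (HC : forall n, (n < N)%nat -> 0 < C n)
  (Hrho : sumR N (fun n => r n / C n) <= 1)
  (K : nat) (cls : nat -> nat) (a l : nat -> R) :
  valid_trace N r sigma K cls a l ->
  forall j, (1 <= j <= K)%nat ->
    dep C cls a l j - a j <= sumR N (fun n => sigma n / C n).
Proof.
  intros Hvalid j Hj. pose proof Hvalid as [Hpk [Hmono _]].
  destruct (dep_busy_period C cls a l j) as [i [Hi Hdep]]; [lia|apply Hpk; lia|].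
  set (gap := a j - a i).
  assert (Hgap : 0 <= gap) by (apply Rge_le, Rge_minus, Rle_ge, (arrivals_monotone K a Hmono); lia).
  assert (Hwork : work C cls l i j <= sumR N (fun n => r n / C n) * gap
                                      + sumR N (fun n => sigma n / C n)).
  { rewrite (work_by_class N) by (intros k Hk; apply Hpk; lia).
    rewrite <- sumR_scal, <- sumR_plus. apply sumR_le; intros n Hn.
    replace (r n / C n * gap + sigma n / C n) with ((r n * gap + sigma n) / C n)
      by (unfold Rdiv; ring).
    apply Rmult_le_compat_r; [left; apply Rinv_0_lt_compat, HC, Hn|].
    apply (class_work_le_envelope N r sigma K cls a l); auto; lia. }
  assert (sumR N (fun n => r n / C n) * gap <= gap)
    by (rewrite <- (Rmult_1_l gap) at 2; apply Rmult_le_compat_r; assumption).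
  unfold gap in *. lra.
Qed.

Lemma dep_simultaneous (C : nat -> R) (cls : nat -> nat) (l : nat -> R) (j : nat) :
  (forall k, (1 <= k <= j)%nat -> 0 <= l k / C (cls k)) ->
  dep C cls (fun _ => 0) l j = work C cls l 1 j.
Proof.
  induction j as [|j IH]; intros Hl; [reflexivity|]. cbn [dep].
  rewrite IH by (intros; apply Hl; lia). unfold work. simpl.
  assert (0 <= sumR j (fun k => l (S k) / C (cls (S k)))).
  { rewrite <- (sumR_zero j (fun _ => 0)) by reflexivity.
    apply sumR_le; intros k Hk. apply Hl; lia. }
  rewrite Rmax_right by lra. reflexivity.
Qed.

(* Burst trace: packets of positive length, classes below M, whose class-n
   total is sigma_n for every n < M (classes with sigma_n = 0 send nothing). *)
Lemma burst_trace (sigma : nat -> R) (M : nat) :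
  (forall n, (n < M)%nat -> 0 <= sigma n) ->
  exists K cls l,
    (forall j, (1 <= j <= K)%nat -> (cls j < M)%nat /\ 0 < l j) /\
    (forall n, (n < M)%nat -> class_work cls l 1 K n = sigma n).
Proof.
  induction M as [|M IH]; intros Hs.
  - exists 0%nat, (fun _ => 0%nat), (fun _ => 1). split; intros; lia.
  - destruct IH as [K [cls [l [Hpk Htot]]]]; [intros n Hn; apply Hs; lia|].
    assert (HnoM : class_work cls l 1 K M = 0).
    { apply sumR_zero. intros k Hk. destruct (Hpk (S k)) as [Hc _]; [lia|]. simpl.
      destruct (Nat.eqb_spec (cls (S k)) M); [lia|reflexivity]. }
    destruct (Rlt_dec 0 (sigma M)) as [Hpos|Hzero].
    +
      exists (S K), (fun j => if Nat.eqb j (S K) then M else cls j),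
        (fun j => if Nat.eqb j (S K) then sigma M else l j).
      split.
      * intros j Hj. destruct (Nat.eqb_spec j (S K)); [split; [lia|exact Hpos]|].
        destruct (Hpk j) as [Hc Hl]; [lia|]. split; [lia|exact Hl].
      * intros n Hn. unfold class_work in *. simpl. rewrite Nat.eqb_refl.
        rewrite (sumR_ext K _ (fun k => if Nat.eqb (cls (S k)) n then l (S k) else 0)).
        2:{ intros k Hk. destruct (Nat.eqb_spec k K); [lia|reflexivity]. }
        destruct (Nat.eqb_spec M n) as [<-|Hne].
        -- simpl in HnoM. rewrite HnoM. ring.
        -- simpl in Htot. rewrite Htot by lia. ring.
    + exists K, cls, l. split.
      * intros j Hj. destruct (Hpk j) as [Hc Hl]; [exact Hj|]. split; [lia|exact Hl].
      * intros n Hn. destruct (Nat.eq_dec n M) as [->|Hne]; [|apply Htot; lia].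
        assert (0 <= sigma M) by (apply Hs; lia). lra.
Qed.

Lemma arrivals_le_total (K : nat) (cls : nat -> nat) (a l : nat -> R) (n : nat) (s t : R) :
  (forall k, (1 <= k <= K)%nat -> 0 <= l k) ->
  Arr K cls a l n s t <= class_work cls l 1 K n.
Proof.
  intros Hl. apply sumR_le; intros k Hk. assert (0 <= l (S k)) by (apply Hl; lia). simpl.
  destruct (Nat.eqb (cls (S k)) n), (Rle_dec s (a (S k)));
    try destruct (Rle_dec (a (S k)) t); lra.
Qed.

Lemma fifo_delay_tight (N : nat) (C r sigma : nat -> R)
  (HC : forall n, (n < N)%nat -> 0 < C n)
  (Hr : forall n, (n < N)%nat -> 0 <= r n)
  (Hs : forall n, (n < N)%nat -> 0 <= sigma n)
  (m : nat) (Hm : (m < N)%nat) (Hsm : 0 < sigma m) :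
  exists (K : nat) (cls : nat -> nat) (a l : nat -> R),
    valid_trace N r sigma K cls a l /\
    exists j, (1 <= j <= K)%nat /\
      dep C cls a l j - a j = sumR N (fun n => sigma n / C n).
Proof.
  destruct (burst_trace sigma N Hs) as [K [cls [l [Hpk Htot]]]].
  exists K, cls, (fun _ => 0), l. split; [split; [|split]|].
  - intros j Hj. destruct (Hpk j Hj). repeat split; auto; lra.
  - intros; lra.
  - intros n Hn s t _ Hst. eapply Rle_trans.
    + apply arrivals_le_total. intros k Hk. left. apply Hpk, Hk.
    + rewrite Htot by exact Hn.
      assert (0 <= r n * (t - s)) by (apply Rmult_le_pos; [apply Hr, Hn|lra]). lra.
  - destruct K as [|K].
    + specialize (Htot m Hm). unfold class_work in Htot; simpl in Htot. lra.
    + exists (S K). split; [lia|].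
      rewrite dep_simultaneous, (work_by_class N), Rminus_0_r.
      * apply sumR_ext; intros n Hn. rewrite Htot by exact Hn. reflexivity.
      * intros k Hk. apply Hpk, Hk.
      * intros k Hk. destruct (Hpk k Hk) as [Hc Hl].
        unfold Rdiv. apply Rmult_le_pos; [lra|]. left. apply Rinv_0_lt_compat, HC, Hc.
Qed.

Theorem theorem1 (N : nat) (C r sigma : nat -> R)
  (HC : forall n, (n < N)%nat -> 0 < C n)
  (Hr : forall n, (n < N)%nat -> 0 <= r n)
  (Hs : forall n, (n < N)%nat -> 0 <= sigma n)
  (Hrho : sumR N (fun n => r n / C n) <= 1) :
  (forall (K : nat) (cls : nat -> nat) (a l : nat -> R),
      valid_trace N r sigma K cls a l ->
      forall j, (1 <= j <= K)%nat ->
        dep C cls a l j - a j <= sumR N (fun n => sigma n / C n)) /\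
  ((exists m, (m < N)%nat /\ 0 < sigma m) ->
   exists (K : nat) (cls : nat -> nat) (a l : nat -> R),
      valid_trace N r sigma K cls a l /\
      exists j, (1 <= j <= K)%nat /\
        dep C cls a l j - a j = sumR N (fun n => sigma n / C n)).
Proof.
  split.
  - intros K cls a l. apply fifo_delay_bound; assumption.
  - intros [m [Hm Hsm]]. exact (fifo_delay_tight N C r sigma HC Hr Hs m Hm Hsm).
Qed.
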